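(* Let $\ell\in\mathbb{N}$, $\alpha_j,\beta_j\in\mathbb{N}$ for $j=1,\dots,\ell$, and $q\in\mathbb{C}$ with $|q|<1$. Then $$\mathbf{R}^{\alpha_1}\big[\mathbf{y}^{\beta_1}\cdots\mathbf{R}^{\alpha_\ell}[\mathbf{y}^{\beta_\ell}]\cdots\big](1)=\mathbf{R}^{\beta_\ell}\big[\mathbf{y}^{\alpha_\ell}\mathbf{R}^{\beta_{\ell-1}}[\mathbf{y}^{\alpha_{\ell-1}}\cdots\mathbf{R}^{\beta_1}[\mathbf{y}^{\alpha_1}]\cdots]\big](1),$$ where both sides mean the value at $t=1$ of the corresponding power series in $t$.
   Context: $\mathbf{y}(t)=\frac{t}{1-t}$ and $\mathbf{y}^{\beta}$ denotes multiplication by $\mathbf{y}(t)^\beta$. $\mathbf{R}$ is the operator $\mathbf{R}[f](t)=\sum_{k\ge1}f(q^kt)$ on power series in $t$ without constant term, and $\mathbf{R}^n$ its $n$-fold composition. *)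

From Stdlib Require Import Reals List.
From Coquelicot Require Import Coquelicot.
Open Scope R_scope.

(* A formal power series in t with complex coefficients:
   ps n is the coefficient of t^n. *)
Definition PS := nat -> C.

Fixpoint cpow (z : C) (n : nat) : C :=
  match n with O => RtoC 1 | S m => Cmult z (cpow z m) end.

(* Sum of a complex series (real and imaginary parts summed separately);
   it is the genuine sum whenever the series converges. *)
Definition CSeries (u : nat -> C) : C :=
  (Series (fun k => fst (u k)), Series (fun k => snd (u k))).

Fixpoint csum_upto (f : nat -> C) (n : nat) : C :=
  match n with
  | O => f O
  | S m => Cplus (csum_upto f m) (f (S m))
  end.

Definition ps_mul (a b : PS) : PS :=
  fun n => csum_upto (fun i => Cmult (a i) (b (n - i)%nat)) n.

Definition ps_one : PS := fun n => match n with O => RtoC 1 | _ => RtoC 0 end.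

(* y(t) = t/(1-t) = sum_{n>=1} t^n. *)
Definition ps_y : PS := fun n => match n with O => RtoC 0 | _ => RtoC 1 end.

Definition ps_ypow (beta : nat) : PS := Nat.iter beta (ps_mul ps_y) ps_one.
Definition yop (beta : nat) (f : PS) : PS := ps_mul (ps_ypow beta) f.

(* R[f](t) = sum_{k>=1} f(q^k t): the coefficient of t^n of f(q^k t) is
   f_n q^{k n}; summing over k >= 1 coefficientwise. *)
Definition Rop (q : C) (f : PS) : PS :=
  fun n => CSeries (fun k => Cmult (f n) (cpow q ((S k) * n)%nat)).

Definition Rpow (q : C) (alpha : nat) (f : PS) : PS := Nat.iter alpha (Rop q) f.

(* Nested expression  R^{a1}[ y^{b1} R^{a2}[ y^{b2} ... R^{al}[ y^{bl} ] ... ] ]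
   for the list [(a1,b1); ...; (al,bl)]. *)
Fixpoint nest (q : C) (s : list (nat * nat)) : PS :=
  match s with
  | nil => ps_one
  | (a, b) :: s' => Rpow q a (yop b (nest q s'))
  end.

(* "value at t = 1" of a power series: the sum of its coefficients. *)
Definition has_value_at_1 (f : PS) (v : C) : Prop := is_series f v.

(* Write each side as a word in the letters [R] and [y] applied to [1 = t^0]: since
   [alpha 1 > 0] and [beta l > 0] the left-hand side is [R w y], and the right-hand side
   is [R w* y], where [w*] is [w] read backwards with [R] and [y] exchanged.  For
   [M, K >= 1] let [Phi_w(M, K)] be the value at [t = q^K] of [w] applied to [t^M].
   From [R[t^M] = y(q^M) t^M], [(y f)(q^K) = y(q^K) f(q^K)],
   [R[f](q^K) = sum_(k >= 1) f(q^(K+k))] and [y t^M = sum_(i >= 1) t^(M+i)], induction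
   on [w] gives the duality [Phi_w(M, K) = Phi_w*(K, M)].  The value at [1] of [R w y]
   is [sum_(k, i >= 1) Phi_w(i, k)], which by duality and absolute convergence is
   unchanged when [w] is replaced by [w*]. *)

From Stdlib Require Import Reals List Lia Lra FunctionalExtensionality.
From Coquelicot Require Import Coquelicot.
Open Scope R_scope.

(** * Real and complex series *)

Lemma pow_le_pow_contract (x : R) m n : 0 <= x <= 1 -> (m <= n)%nat -> x ^ n <= x ^ m.
Proof.
  intros Hx Hmn. replace n with (m + (n - m))%nat by lia.
  rewrite pow_add. rewrite <- (Rmult_1_r (x ^ m)) at 2.
  apply Rmult_le_compat_l; [apply pow_le; lra|].
  rewrite <- (pow1 (n - m)). apply pow_incr. lra.
Qed.

Lemma ex_series_Rabs_le (a b : nat -> R) :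
  (forall n, Rabs (a n) <= b n) -> ex_series b -> ex_series a.
Proof. apply (@ex_series_le R_AbsRing R_CompleteNormedModule). Qed.

Lemma sum_n_nonneg (a : nat -> R) N : (forall n, 0 <= a n) -> 0 <= sum_n a N.
Proof.
  intros Ha. induction N as [|N IH]; [rewrite sum_O; apply Ha|].
  rewrite sum_Sn. specialize (Ha (S N)). unfold plus; simpl. lra.
Qed.

Lemma sum_n_le_Series (a : nat -> R) N :
  (forall n, 0 <= a n) -> ex_series a -> sum_n a N <= Series a.
Proof.
  intros Ha Hex. apply (is_lim_seq_incr_compare (sum_n a)).
  - apply Series_correct, Hex.
  - intros n. rewrite sum_Sn. specialize (Ha (S n)). unfold plus; simpl. lra.
Qed.

Lemma Series_nonneg (a : nat -> R) : (forall n, 0 <= a n) -> ex_series a -> 0 <= Series a.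
Proof.
  intros Ha Hex. eapply Rle_trans; [|apply (sum_n_le_Series a 0); auto].
  rewrite sum_O. apply Ha.
Qed.

Lemma ex_series_bounded_nonneg (a : nat -> R) M :
  (forall n, 0 <= a n) -> (forall N, sum_n a N <= M) -> ex_series a /\ Series a <= M.
Proof.
  intros Ha HM.
  assert (Hincr : forall n, sum_n a n <= sum_n a (S n)).
  { intros n. rewrite sum_Sn. specialize (Ha (S n)). unfold plus; simpl. lra. }
  pose proof (Lim_seq_correct _ (ex_lim_seq_incr _ Hincr)) as Hlim.
  pose proof (is_lim_seq_le _ _ _ _ HM Hlim (is_lim_seq_const M)) as Hle.
  pose proof (is_lim_seq_le _ _ _ _ (fun N => sum_n_nonneg a N Ha)
                (is_lim_seq_const 0) Hlim) as Hge.
  unfold Series.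
  destruct (Lim_seq (sum_n a)) as [l| |]; simpl in *; try contradiction.
  split; [exists l; exact Hlim | exact Hle].
Qed.

Lemma Series_sum_n (a : nat -> nat -> R) N :
  (forall n, ex_series (fun m => a m n)) ->
  ex_series (fun m => sum_n (a m) N) /\
  Series (fun m => sum_n (a m) N) = sum_n (fun n => Series (fun m => a m n)) N.
Proof.
  intros Hcol. induction N as [|N [IHex IHeq]].
  - split.
    + apply (ex_series_ext (fun m => a m O)); [intros; rewrite sum_O; auto | apply Hcol].
    + rewrite sum_O. apply Series_ext; intros; rewrite sum_O; auto.
  - assert (E : forall m, sum_n (a m) (S N) = sum_n (a m) N + a m (S N))
      by (intros; rewrite sum_Sn; reflexivity).
    split.
    + apply (ex_series_ext _ _ (fun m => eq_sym (E m))).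
      apply (@ex_series_plus R_AbsRing R_NormedModule); auto.
    + rewrite (Series_ext _ _ E), Series_plus, IHeq, sum_Sn; auto.
Qed.

Lemma Series_swap_le_nonneg (x : nat -> nat -> R) :
  (forall m n, 0 <= x m n) -> (forall m, ex_series (x m)) ->
  ex_series (fun m => Series (x m)) ->
  (forall n, ex_series (fun m => x m n)) /\
  ex_series (fun n => Series (fun m => x m n)) /\
  Series (fun n => Series (fun m => x m n)) <= Series (fun m => Series (x m)).
Proof.
  intros Hx Hrow Hrows.
  assert (Hcol : forall n, ex_series (fun m => x m n)).
  { intros n. apply (ex_series_Rabs_le _ (fun m => Series (x m))); auto.
    intros m. rewrite Rabs_right by apply Rle_ge, Hx.
    eapply Rle_trans; [|apply (sum_n_le_Series (x m) n); auto].
    destruct n as [|n]; [rewrite sum_O; lra|].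
    rewrite sum_Sn. pose proof (sum_n_nonneg (x m) n (Hx m)). unfold plus; simpl. lra. }
  split; [exact Hcol|].
  apply ex_series_bounded_nonneg.
  - intros n. apply Series_nonneg; auto.
  - intros N. destruct (Series_sum_n x N Hcol) as [_ E]. rewrite <- E.
    apply Series_le; auto. intros m. split.
    + apply sum_n_nonneg; auto.
    + apply sum_n_le_Series; auto.
Qed.

Lemma Series_swap_nonneg (x : nat -> nat -> R) :
  (forall m n, 0 <= x m n) -> (forall m, ex_series (x m)) ->
  ex_series (fun m => Series (x m)) ->
  Series (fun m => Series (x m)) = Series (fun n => Series (fun m => x m n)).
Proof.
  intros Hx Hrow Hrows.
  destruct (Series_swap_le_nonneg x Hx Hrow Hrows) as (Hcol & Hcols & Hle).
  destruct (Series_swap_le_nonneg (fun n m => x m n) (fun n m => Hx m n) Hcol Hcols)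
    as (_ & _ & Hge).
  apply Rle_antisym; [exact Hge | exact Hle].
Qed.

(* Split into positive and negative parts, both dominated by [b]. *)
Lemma Series_swap (a b : nat -> nat -> R) :
  (forall m n, Rabs (a m n) <= b m n) -> (forall m, ex_series (b m)) ->
  ex_series (fun m => Series (b m)) ->
  Series (fun m => Series (a m)) = Series (fun n => Series (fun m => a m n)).
Proof.
  intros Hab Hb Hbs.
  set (p := fun m n => (Rabs (a m n) + a m n) / 2).
  set (r := fun m n => (Rabs (a m n) - a m n) / 2).
  assert (Hpr : forall m n, 0 <= p m n <= b m n /\ 0 <= r m n <= b m n).
  { intros m n. unfold p, r. specialize (Hab m n).
    pose proof (Rle_abs (a m n)). pose proof (Rabs_maj2 (a m n)). lra. }
  assert (Hrow : forall c : nat -> nat -> R, (forall m n, 0 <= c m n <= b m n) ->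
            (forall m, ex_series (c m)) /\ ex_series (fun m => Series (c m))).
  { intros c Hc. assert (Hcr : forall m, ex_series (c m)).
    { intros m. apply (ex_series_Rabs_le _ (b m)); auto. intros n.
      rewrite Rabs_right; apply Hc || apply Rle_ge, Hc. }
    split; [exact Hcr|]. apply (ex_series_Rabs_le _ (fun m => Series (b m))); auto.
    intros m. rewrite Rabs_right by (apply Rle_ge, Series_nonneg; auto; apply Hc).
    apply Series_le; auto. }
  destruct (Hrow p (fun m n => proj1 (Hpr m n))) as [Hp Hps].
  destruct (Hrow r (fun m n => proj2 (Hpr m n))) as [Hr Hrs].
  pose proof (Series_swap_le_nonneg p (fun m n => proj1 (proj1 (Hpr m n))) Hp Hps) as [Hpc _].
  pose proof (Series_swap_le_nonneg r (fun m n => proj1 (proj2 (Hpr m n))) Hr Hrs) as [Hrc _].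
  assert (Erow : forall m, Series (a m) = Series (p m) - Series (r m)).
  { intros m. rewrite <- Series_minus; auto. apply Series_ext; intros; unfold p, r; field. }
  assert (Ecol : forall n, Series (fun m => a m n)
                   = Series (fun m => p m n) - Series (fun m => r m n)).
  { intros n. rewrite <- Series_minus; auto. apply Series_ext; intros; unfold p, r; field. }
  rewrite (Series_ext _ _ Erow), (Series_ext _ _ Ecol), !Series_minus; auto.
  - rewrite (Series_swap_nonneg p), (Series_swap_nonneg r); auto;
      intros; apply Hpr.
  - apply (Series_swap_le_nonneg p); auto; intros; apply Hpr.
  - apply (Series_swap_le_nonneg r); auto; intros; apply Hpr.
Qed.

Lemma ex_series_geom_scal c x : 0 <= x < 1 -> ex_series (fun n => c * x ^ n).
Proof.
  intros Hx. apply (@ex_series_scal_l R_AbsRing R_NormedModule c (fun n => x ^ n)).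
  apply ex_series_geom. rewrite Rabs_right; lra.
Qed.

Lemma Series_geom_scal c x : 0 <= x < 1 -> Series (fun n => c * x ^ n) = c / (1 - x).
Proof.
  intros Hx. rewrite Series_scal_l.
  replace (Series (pow x)) with (/ (1 - x)); [reflexivity|].
  symmetry. apply is_series_unique, is_series_geom. rewrite Rabs_right; lra.
Qed.

Lemma Series_geom_from c x m : 0 <= x < 1 ->
  ex_series (fun N => if Nat.leb m N then c * x ^ N else 0) /\
  Series (fun N => if Nat.leb m N then c * x ^ N else 0) = c * x ^ m / (1 - x).
Proof.
  intros Hx.
  assert (E : forall k, (if Nat.leb m (m + k) then c * x ^ (m + k) else 0) = (c * x ^ m) * x ^ k).
  { intros k. rewrite (proj2 (Nat.leb_le _ _)) by lia. rewrite pow_add. ring. }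
  split.
  - apply (ex_series_incr_n _ m), (ex_series_ext _ _ (fun k => eq_sym (E k))).
    apply ex_series_geom_scal; auto.
  - rewrite (Series_incr_n_aux _ m), (Series_ext _ _ E), Series_geom_scal; auto.
    intros k Hk. rewrite (proj2 (Nat.leb_gt _ _)) by lia. reflexivity.
Qed.

Lemma is_series_of_remainder (a e : nat -> R) s c y :
  (forall n, s = sum_n a n + e n) -> (forall n, Rabs (e n) <= c * y ^ n) -> 0 <= y < 1 ->
  is_series a s.
Proof.
  intros Hs He Hy.
  assert (Hgeom : is_lim_seq (fun n => c * y ^ n) 0).
  { replace (Finite 0) with (Rbar_mult c 0) by (simpl; f_equal; ring).
    apply is_lim_seq_scal_l, is_lim_seq_geom. rewrite Rabs_right; lra. }
  assert (He0 : is_lim_seq e 0).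
  { apply (is_lim_seq_le_le (fun n => - (c * y ^ n)) e (fun n => c * y ^ n)); auto.
    - intros n. specialize (He n). pose proof (Rabs_maj2 (e n)). pose proof (Rle_abs (e n)). lra.
    - replace (Finite 0) with (Rbar_opp 0) by (simpl; f_equal; ring).
      apply -> is_lim_seq_opp. exact Hgeom. }
  change (is_lim_seq (sum_n a) s).
  apply (is_lim_seq_ext (fun n => s - e n)); [intros n; rewrite (Hs n); ring|].
  replace (Finite s) with (Finite (s - 0)) by (f_equal; ring).
  apply is_lim_seq_minus'; [apply is_lim_seq_const | exact He0].
Qed.

Lemma sum_n_C (u : nat -> C) n :
  sum_n u n = (sum_n (fun k => fst (u k)) n, sum_n (fun k => snd (u k)) n).
Proof.
  induction n as [|n IH]; [rewrite !sum_O; destruct (u O); reflexivity|].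
  rewrite !sum_Sn, IH. reflexivity.
Qed.

Lemma is_series_C (u : nat -> C) (v : C) :
  is_series u v <->
  is_series (fun n => fst (u n)) (fst v) /\ is_series (fun n => snd (u n)) (snd v).
Proof.
  unfold is_series. split.
  - intros H. split; apply filterlim_locally; intros eps;
      generalize (proj1 (filterlim_locally _ _) H eps); apply filter_imp;
      intros n Hn; rewrite sum_n_C in Hn; apply Hn.
  - intros [H1 H2]. apply filterlim_locally. intros eps.
    generalize (filter_and _ _ (proj1 (filterlim_locally _ _) H1 eps)
                               (proj1 (filterlim_locally _ _) H2 eps)).
    apply filter_imp. intros n Hn. rewrite sum_n_C. exact Hn.
Qed.

Lemma CSeries_unique (u : nat -> C) (v : C) : is_series u v -> CSeries u = v.
Proof.
  intros [H1 H2]%is_series_C. unfold CSeries.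
  rewrite (is_series_unique _ _ H1), (is_series_unique _ _ H2). destruct v; reflexivity.
Qed.

Lemma CSeries_correct (u : nat -> C) : ex_series u -> is_series u (CSeries u).
Proof. intros [v Hv]. rewrite (CSeries_unique _ _ Hv). exact Hv. Qed.

Lemma ex_series_Cmod_le (u : nat -> C) (b : nat -> R) :
  (forall n, Cmod (u n) <= b n) -> ex_series b -> ex_series u.
Proof. apply (@ex_series_le C_AbsRing C_CompleteNormedModule). Qed.

Lemma CSeries_Cmod_le (u : nat -> C) (b : nat -> R) :
  (forall n, Cmod (u n) <= b n) -> ex_series b -> Cmod (CSeries u) <= Series b.
Proof.
  intros Hub Hb.
  assert (Hu : is_series u (CSeries u)) by (apply CSeries_correct, (ex_series_Cmod_le _ b); auto).
  apply (is_lim_seq_le (fun n => Cmod (sum_n u n)) (sum_n b) (Cmod (CSeries u)) (Series b)).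
  - intros n. eapply Rle_trans; [apply (norm_sum_n_m u 0 n)|]. apply sum_n_m_le, Hub.
  - apply (filterlim_comp _ _ _ (sum_n u) norm _ _ _ Hu (filterlim_norm _)).
  - apply Series_correct, Hb.
Qed.

Lemma CSeries_ext (u v : nat -> C) : (forall n, u n = v n) -> CSeries u = CSeries v.
Proof. intros H. unfold CSeries. f_equal; apply Series_ext; intros; rewrite H; reflexivity. Qed.

Lemma CSeries_plus (u v : nat -> C) : ex_series u -> ex_series v ->
  CSeries (fun n => Cplus (u n) (v n)) = Cplus (CSeries u) (CSeries v).
Proof.
  intros Hu Hv. apply CSeries_unique.
  exact (is_series_plus _ _ _ _ (CSeries_correct _ Hu) (CSeries_correct _ Hv)).
Qed.

Lemma CSeries_scal (c : C) (u : nat -> C) : ex_series u ->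
  CSeries (fun n => Cmult c (u n)) = Cmult c (CSeries u).
Proof. intros Hu. apply CSeries_unique. exact (is_series_scal _ _ _ (CSeries_correct _ Hu)). Qed.

Lemma CSeries_shift (u : nat -> C) : ex_series u ->
  CSeries u = Cplus (u O) (CSeries (fun k => u (S k))).
Proof.
  intros Hu. destruct (proj1 (is_series_C _ _) (CSeries_correct _ Hu)) as [H1 H2].
  unfold CSeries.
  rewrite (Series_incr_1 _ (ex_intro _ _ H1)), (Series_incr_1 _ (ex_intro _ _ H2)).
  reflexivity.
Qed.

Lemma is_series_single (x : C) M :
  is_series (fun N => if Nat.eqb N M then x else RtoC 0) x.
Proof.
  assert (Hsum : forall n, sum_n (fun N => if Nat.eqb N M then x else RtoC 0) n
                           = if Nat.leb M n then x else RtoC 0).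
  { induction n as [|n IH].
    - rewrite sum_O. destruct M; reflexivity.
    - rewrite sum_Sn, IH.
      destruct (Nat.leb_spec M n), (Nat.leb_spec M (S n)), (Nat.eqb_spec (S n) M);
        try lia; [apply Cplus_0_r | apply Cplus_0_l ..]. }
  apply (filterlim_ext_loc (fun _ => x)); [|apply filterlim_const].
  exists M. intros n Hn. rewrite Hsum. apply Nat.leb_le in Hn. rewrite Hn. reflexivity.
Qed.

Lemma CSeries_zero : CSeries (fun _ => RtoC 0) = RtoC 0.
Proof.
  rewrite (CSeries_ext _ (fun N => if Nat.eqb N O then RtoC 0 else RtoC 0))
    by (intros; destruct (Nat.eqb _ _); reflexivity).
  apply CSeries_unique, is_series_single.
Qed.

Lemma CSeries_swap (a : nat -> nat -> C) (b : nat -> nat -> R) :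
  (forall m n, Cmod (a m n) <= b m n) -> (forall m, ex_series (b m)) ->
  ex_series (fun m => Series (b m)) ->
  CSeries (fun m => CSeries (a m)) = CSeries (fun n => CSeries (fun m => a m n)).
Proof.
  intros Hab Hb Hbs. unfold CSeries. simpl. f_equal; apply (Series_swap _ b); auto;
    intros m n; eapply Rle_trans; [|apply Hab | |apply Hab];
    eapply Rle_trans; [|apply Rmax_Cmod| |apply Rmax_Cmod];
    [apply Rmax_l | apply Rmax_r].
Qed.

Lemma is_series_C_of_remainder (a e : nat -> C) s c y :
  (forall n, s = Cplus (sum_n a n) (e n)) -> (forall n, Cmod (e n) <= c * y ^ n) ->
  0 <= y < 1 -> is_series a s.
Proof.
  intros Hs He Hy. apply is_series_C. split.
  - apply (is_series_of_remainder _ (fun n => fst (e n)) _ c y); auto.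
    + intros n. rewrite (Hs n) at 1. rewrite sum_n_C. reflexivity.
    + intros n. eapply Rle_trans; [|apply He]. eapply Rle_trans; [|apply Rmax_Cmod]. apply Rmax_l.
  - apply (is_series_of_remainder _ (fun n => snd (e n)) _ c y); auto.
    + intros n. rewrite (Hs n) at 1. rewrite sum_n_C. reflexivity.
    + intros n. eapply Rle_trans; [|apply He]. eapply Rle_trans; [|apply Rmax_Cmod]. apply Rmax_r.
Qed.

(** * Power series and words in [R] and [y] *)

Lemma csum_upto_shift (g : nat -> C) n :
  csum_upto g (S n) = Cplus (g O) (csum_upto (fun i => g (S i)) n).
Proof.
  induction n as [|n IH]; [reflexivity|].
  change (csum_upto g (S (S n))) with (Cplus (csum_upto g (S n)) (g (S (S n)))).
  rewrite IH. simpl. ring.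
Qed.

Lemma eq_csum_upto (f g : nat -> C) n :
  (forall i, f i = g i) -> csum_upto f n = csum_upto g n.
Proof. intros H; induction n; simpl; rewrite ?IHn, ?H; reflexivity. Qed.

Lemma csum_upto_plus (f g : nat -> C) n :
  csum_upto (fun i => Cplus (f i) (g i)) n = Cplus (csum_upto f n) (csum_upto g n).
Proof. induction n; simpl; rewrite ?IHn; ring. Qed.

Lemma csum_upto_zero n : csum_upto (fun _ => RtoC 0) n = RtoC 0.
Proof. induction n; simpl; rewrite ?IHn; ring. Qed.

Definition monomial (M : nat) : PS := fun N => if Nat.eqb N M then RtoC 1 else RtoC 0.

(* [ps_tail M] is [y t^M = t^(M+1) + t^(M+2) + ...]. *)
Definition ps_tail (M : nat) : PS := fun N => if Nat.ltb M N then RtoC 1 else RtoC 0.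

Definition ymul (f : PS) : PS := ps_mul ps_y f.

Lemma ymul_0 (f : PS) : ymul f O = RtoC 0.
Proof. unfold ymul, ps_mul, ps_y. simpl. ring. Qed.

Lemma ymul_S (f : PS) N : ymul f (S N) = Cplus (ymul f N) (f N).
Proof.
  assert (Hform : forall N, ymul f (S N) = csum_upto (fun i => f (N - i)%nat) N).
  { intros n. unfold ymul, ps_mul. rewrite csum_upto_shift.
    rewrite (eq_csum_upto _ (fun i => f (n - i)%nat)) by (intros; simpl; ring).
    simpl. ring. }
  destruct N as [|N].
  - rewrite Hform, ymul_0. simpl. ring.
  - rewrite !Hform, csum_upto_shift. simpl (S N - 0)%nat.
    rewrite (eq_csum_upto (fun i => f (S N - S i)%nat) (fun i => f (N - i)%nat)) by reflexivity.
    ring.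
Qed.

Lemma ps_mul_ymul_l (h g : PS) : ps_mul (ymul h) g = ymul (ps_mul h g).
Proof.
  apply functional_extensionality; intro N.
  induction N as [|N IH].
  - rewrite ymul_0. unfold ps_mul. simpl. rewrite ymul_0. ring.
  - rewrite ymul_S, <- IH. unfold ps_mul at 1. rewrite csum_upto_shift, ymul_0.
    rewrite (eq_csum_upto _ (fun i => Cplus (Cmult (ymul h i) (g (N - i)%nat))
                                           (Cmult (h i) (g (N - i)%nat)))).
    2: { intros i. simpl. rewrite ymul_S. ring. }
    rewrite csum_upto_plus. unfold ps_mul. ring.
Qed.

Lemma ps_mul_1l (g : PS) : ps_mul ps_one g = g.
Proof.
  apply functional_extensionality; intros [|n]; unfold ps_mul; [simpl; ring|].
  rewrite csum_upto_shift, (eq_csum_upto _ (fun _ => RtoC 0)) by (intros; simpl; ring).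
  rewrite csum_upto_zero. simpl. ring.
Qed.

Lemma ps_one_monomial : ps_one = monomial O.
Proof. apply functional_extensionality; intros [|n]; reflexivity. Qed.

Lemma ymul_monomial M : ymul (monomial M) = ps_tail M.
Proof.
  apply functional_extensionality; intros N. unfold ps_tail.
  induction N as [|N IH].
  - rewrite ymul_0. destruct (Nat.ltb_spec M 0); [lia|reflexivity].
  - rewrite ymul_S, IH. unfold monomial.
    destruct (Nat.ltb_spec M N), (Nat.ltb_spec M (S N)), (Nat.eqb_spec N M); try lia; ring.
Qed.

Lemma ps_tail_S M : ps_tail M = fun N => Cplus (monomial (S M) N) (ps_tail (S M) N).
Proof.
  apply functional_extensionality; intros N. unfold ps_tail, monomial.
  destruct (Nat.ltb_spec M N), (Nat.ltb_spec (S M) N), (Nat.eqb_spec N (S M)); try lia; ring.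
Qed.

Lemma ymul_plus (f g : PS) N :
  ymul (fun n => Cplus (f n) (g n)) N = Cplus (ymul f N) (ymul g N).
Proof. induction N; rewrite ?ymul_0, ?ymul_S, ?IHN; ring. Qed.

Lemma ymul_scal (c : C) (f : PS) N : ymul (fun n => Cmult c (f n)) N = Cmult c (ymul f N).
Proof. induction N; rewrite ?ymul_0, ?ymul_S, ?IHN; ring. Qed.

Inductive letter := LR | LY.

Fixpoint eval_word (q : C) (w : list letter) (f : PS) : PS :=
  match w with
  | nil => f
  | LR :: w' => Rop q (eval_word q w' f)
  | LY :: w' => ymul (eval_word q w' f)
  end.

Lemma eval_word_app q w1 w2 f : eval_word q (w1 ++ w2) f = eval_word q w1 (eval_word q w2 f).
Proof. induction w1 as [|[|] w1 IH]; simpl; rewrite ?IH; reflexivity. Qed.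

Fixpoint word_of_blocks (s : list (nat * nat)) : list letter :=
  match s with
  | nil => nil
  | (a, b) :: s' => repeat LR a ++ repeat LY b ++ word_of_blocks s'
  end.

Lemma word_of_blocks_app s1 s2 :
  word_of_blocks (s1 ++ s2) = word_of_blocks s1 ++ word_of_blocks s2.
Proof. induction s1 as [|[a b] s IH]; simpl; rewrite ?IH, ?app_assoc; reflexivity. Qed.

Lemma eval_word_repeat_LR q a f : eval_word q (repeat LR a) f = Rpow q a f.
Proof. induction a; simpl; rewrite ?IHa; reflexivity. Qed.

Lemma eval_word_repeat_LY q b f : eval_word q (repeat LY b) f = yop b f.
Proof.
  unfold yop, ps_ypow. induction b as [|b IH]; simpl.
  - now rewrite ps_mul_1l.
  - rewrite IH. fold (ymul (Nat.iter b (ps_mul ps_y) ps_one)). now rewrite ps_mul_ymul_l.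
Qed.

Lemma nest_eval_word q s : nest q s = eval_word q (word_of_blocks s) (monomial O).
Proof.
  induction s as [|[a b] s IH]; simpl; [apply ps_one_monomial|].
  rewrite !eval_word_app, eval_word_repeat_LR, eval_word_repeat_LY, IH. reflexivity.
Qed.

Definition swap_letter (x : letter) : letter := match x with LR => LY | LY => LR end.
Definition dual_word (w : list letter) : list letter := rev (map swap_letter w).

Lemma rev_repeat {A} (x : A) n : rev (repeat x n) = repeat x n.
Proof.
  induction n as [|n IH]; simpl; [reflexivity|].
  rewrite IH, <- repeat_cons. reflexivity.
Qed.

Lemma word_of_blocks_rev_swap s :
  word_of_blocks (rev (map (fun p => (snd p, fst p)) s)) = dual_word (word_of_blocks s).
Proof.
  induction s as [|[a b] s IH]; simpl; [reflexivity|].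
  rewrite word_of_blocks_app, IH. unfold dual_word. simpl.
  rewrite !map_app, !rev_app_distr, !map_repeat, !rev_repeat, app_nil_r, app_assoc.
  reflexivity.
Qed.

Lemma dual_word_frame w : dual_word (LR :: w ++ LY :: nil) = LR :: dual_word w ++ LY :: nil.
Proof. unfold dual_word. simpl. rewrite map_app, rev_app_distr. reflexivity. Qed.

Lemma frame_of_head_last (u t v : list letter) :
  u = LR :: t -> u = v ++ LY :: nil -> exists w, u = LR :: w ++ LY :: nil.
Proof.
  intros -> Hv. destruct v as [|x v]; [discriminate|].
  injection Hv as -> ->. exists v. reflexivity.
Qed.

Lemma word_of_blocks_frame l (alpha beta : nat -> nat) :
  (1 <= l)%nat -> (0 < alpha 1%nat)%nat -> (0 < beta l)%nat ->
  exists w, word_of_blocks (map (fun j => (alpha j, beta j)) (seq 1 l)) = LR :: w ++ LY :: nil.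
Proof.
  intros hl ha hb. destruct l as [|l]; [lia|].
  apply (frame_of_head_last _
           (repeat LR (pred (alpha 1%nat)) ++ repeat LY (beta 1%nat) ++
            word_of_blocks (map (fun j => (alpha j, beta j)) (seq 2 l)))
           (word_of_blocks (map (fun j => (alpha j, beta j)) (seq 1 l)) ++
            repeat LR (alpha (S l)) ++ repeat LY (pred (beta (S l))))).
  - simpl. destruct (alpha 1%nat); [lia|]. reflexivity.
  - rewrite seq_S, map_app, word_of_blocks_app. simpl.
    destruct (beta (S l)) as [|b]; [lia|].
    simpl Init.Nat.pred. replace (S b) with (b + 1)%nat by lia.
    rewrite repeat_app, app_nil_r, !app_assoc. reflexivity.
Qed.

(** * Growth estimates *)

Lemma cpow_add (z : C) m n : cpow z (m + n) = Cmult (cpow z m) (cpow z n).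
Proof. induction m as [|m IH]; simpl; [|rewrite IH]; ring. Qed.

Lemma Cmod_cpow (z : C) n : Cmod (cpow z n) = Cmod z ^ n.
Proof. induction n as [|n IH]; simpl; [apply Cmod_1|rewrite Cmod_mult, IH; reflexivity]. Qed.

(* The coefficients of every series below grow at most like [rho q ^ N], where [rho q]
   lies strictly between [1] and [1 / Cmod q]; each letter [R] or [y] costs a factor
   [lam q] in the constant. *)
Definition rho (q : C) : R := 2 / (1 + Cmod q).
Definition lam (q : C) : R := / (rho q - 1).

Definition vanishes_below (m : nat) (f : PS) : Prop := forall N, (N < m)%nat -> f N = RtoC 0.
Definition rho_bounded (q : C) (c : R) (f : PS) : Prop := forall N, Cmod (f N) <= c * rho q ^ N.

(* [yq q K] is [y(q^K)]. *)
Definition yq (q : C) (K : nat) : C := CSeries (fun k => cpow q (S k * K)).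

Definition value_at_qpow (q : C) (K : nat) (f : PS) : C :=
  CSeries (fun N => Cmult (f N) (cpow q (K * N))).

Lemma Cmult_fixpoint_eq_0 (d z : C) : Cmod z < 1 -> d = Cmult z d -> d = RtoC 0.
Proof.
  intros Hz Hd. apply Cmod_eq_0. pose proof (Cmod_ge_0 d). pose proof (Cmod_ge_0 z).
  assert (E : Cmod d = Cmod z * Cmod d) by (rewrite <- Cmod_mult; congruence).
  nra.
Qed.

Section Estimates.

Variable q : C.
Hypothesis hq : Cmod q < 1.

Lemma rho_gt_1 : 1 < rho q.
Proof.
  pose proof (Cmod_ge_0 q). unfold rho.
  apply (Rmult_lt_reg_r (1 + Cmod q)); [lra|]. field_simplify; lra.
Qed.

Lemma rho_Cmod_lt_1 : 0 <= rho q * Cmod q < 1.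
Proof.
  pose proof (Cmod_ge_0 q). unfold rho. split.
  - apply Rmult_le_pos; [apply Rlt_le, Rdiv_lt_0_compat|]; lra.
  - apply (Rmult_lt_reg_r (1 + Cmod q)); [lra|]. field_simplify; lra.
Qed.

Lemma lam_ge_inv : / (1 - Cmod q) <= lam q.
Proof.
  pose proof (Cmod_ge_0 q). unfold lam, rho.
  replace (/ (2 / (1 + Cmod q) - 1)) with ((1 + Cmod q) * / (1 - Cmod q)) by (field; lra).
  rewrite <- (Rmult_1_l (/ (1 - Cmod q))) at 1.
  apply Rmult_le_compat_r; [apply Rlt_le, Rinv_0_lt_compat|]; lra.
Qed.

Lemma lam_pos : 0 < lam q.
Proof. apply Rinv_0_lt_compat. pose proof rho_gt_1. lra. Qed.

Lemma rho_bounded_nonneg c f : rho_bounded q c f -> 0 <= c.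
Proof.
  intros Hf. specialize (Hf O). simpl in Hf. pose proof (Cmod_ge_0 (f O)). lra.
Qed.

Lemma Cmod_cpow_le_mul n m k : (n + k <= m)%nat -> Cmod (cpow q m) <= Cmod q ^ n * Cmod q ^ k.
Proof.
  intros Hm. pose proof (Cmod_ge_0 q). rewrite Cmod_cpow, <- pow_add.
  apply pow_le_pow_contract; lra || lia.
Qed.

Lemma ex_series_yq K : (1 <= K)%nat -> ex_series (fun k => cpow q (S k * K)).
Proof.
  intros HK. pose proof (Cmod_ge_0 q).
  apply (ex_series_Cmod_le _ (fun k => Cmod q ^ K * Cmod q ^ k)).
  - intros k. apply Cmod_cpow_le_mul. simpl. nia.
  - apply ex_series_geom_scal. lra.
Qed.

Lemma Cmod_yq_le K : (1 <= K)%nat -> Cmod (yq q K) <= Cmod q ^ K / (1 - Cmod q).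
Proof.
  intros HK. pose proof (Cmod_ge_0 q).
  rewrite <- Series_geom_scal by lra. apply CSeries_Cmod_le.
  - intros k. apply Cmod_cpow_le_mul. simpl. nia.
  - apply ex_series_geom_scal. lra.
Qed.

(* Without [f 0 = 0] the series defining [Rop q f 0] diverges and [CSeries] is junk. *)
Lemma Rop_coef f N : f O = RtoC 0 -> Rop q f N = Cmult (f N) (yq q N).
Proof.
  intros Hf0. unfold Rop, yq. destruct N as [|N].
  - rewrite Hf0, Cmult_0_l, (CSeries_ext _ (fun _ => RtoC 0)) by (intros; apply Cmult_0_l).
    apply CSeries_zero.
  - apply CSeries_scal, ex_series_yq. lia.
Qed.

Lemma Rop_decay c f N : f O = RtoC 0 -> rho_bounded q c f ->
  Cmod (Rop q f N) <= c / (1 - Cmod q) * (rho q * Cmod q) ^ N.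
Proof.
  intros Hf0 Hf. pose proof (Cmod_ge_0 q). pose proof (rho_bounded_nonneg _ _ Hf).
  rewrite Rop_coef, Cmod_mult by exact Hf0. destruct N as [|N].
  - rewrite Hf0, Cmod_0, Rmult_0_l. apply Rmult_le_pos; [|apply pow_le, rho_Cmod_lt_1].
    apply Rmult_le_pos; [lra|apply Rlt_le, Rinv_0_lt_compat; lra].
  - eapply Rle_trans.
    + apply Rmult_le_compat; try apply Cmod_ge_0; [apply Hf | apply Cmod_yq_le; lia].
    + rewrite Rpow_mult_distr. apply Req_le. field. lra.
Qed.

Lemma rho_bounded_Rop c f : f O = RtoC 0 -> rho_bounded q c f ->
  rho_bounded q (c * lam q) (Rop q f).
Proof.
  intros Hf0 Hf N. pose proof (Cmod_ge_0 q). pose proof (rho_bounded_nonneg _ _ Hf).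
  pose proof rho_gt_1. pose proof lam_ge_inv.
  eapply Rle_trans; [apply (Rop_decay c f N Hf0 Hf)|].
  assert (HP : 0 <= (rho q * Cmod q) ^ N <= rho q ^ N).
  { split; [apply pow_le|apply pow_incr]; nra. }
  assert (HA : 0 <= c / (1 - Cmod q) <= c * lam q).
  { split; [apply Rmult_le_pos; [|apply Rlt_le, Rinv_0_lt_compat]; lra|].
    apply Rmult_le_compat_l; auto. }
  set (P := (rho q * Cmod q) ^ N) in *. set (A := c / (1 - Cmod q)) in *. nra.
Qed.

Lemma rho_bounded_ymul c f : rho_bounded q c f -> rho_bounded q (c * lam q) (ymul f).
Proof.
  intros Hf. pose proof rho_gt_1. pose proof (rho_bounded_nonneg _ _ Hf).
  assert (Hsum : forall N, Cmod (ymul f N) <= c * lam q * (rho q ^ N - 1)).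
  { unfold lam. induction N as [|N IH].
    - rewrite ymul_0, Cmod_0. simpl. lra.
    - rewrite ymul_S. eapply Rle_trans; [apply Cmod_triangle|].
      eapply Rle_trans; [apply Rplus_le_compat; [apply IH | apply Hf]|].
      apply Req_le. simpl. field. lra. }
  intros N. eapply Rle_trans; [apply Hsum|].
  apply Rmult_le_compat_l; [apply Rmult_le_pos; auto; apply Rlt_le, lam_pos|lra].
Qed.

Lemma vanishes_below_Rop m f : (1 <= m)%nat -> vanishes_below m f -> vanishes_below m (Rop q f).
Proof. intros Hm Hf N HN. rewrite Rop_coef by (apply Hf; lia). rewrite Hf by lia. ring. Qed.

Lemma vanishes_below_ymul m f : vanishes_below m f -> vanishes_below m (ymul f).
Proof.
  intros Hf N HN. induction N as [|N IH]; [apply ymul_0|].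
  rewrite ymul_S, IH, Hf by lia. ring.
Qed.

Lemma vanishes_below_eval_word w m f : (1 <= m)%nat -> vanishes_below m f ->
  vanishes_below m (eval_word q w f).
Proof.
  intros Hm Hf. induction w as [|[|] w IH]; simpl;
    [exact Hf | apply vanishes_below_Rop | apply vanishes_below_ymul]; auto.
Qed.

Lemma eval_word_at_0 w f : f O = RtoC 0 -> eval_word q w f O = RtoC 0.
Proof.
  intros Hf0. induction w as [|[|] w IH]; simpl; [exact Hf0| |apply ymul_0].
  rewrite Rop_coef, IH by exact IH. ring.
Qed.

Lemma rho_bounded_eval_word w c f : f O = RtoC 0 -> rho_bounded q c f ->
  rho_bounded q (c * lam q ^ length w) (eval_word q w f).
Proof.
  intros Hf0 Hf. induction w as [|x w IH]; simpl.
  - rewrite Rmult_1_r. exact Hf.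
  - replace (c * (lam q * lam q ^ length w)) with (c * lam q ^ length w * lam q) by ring.
    destruct x; [apply rho_bounded_Rop | apply rho_bounded_ymul]; auto.
    apply eval_word_at_0, Hf0.
Qed.

Lemma eval_word_plus w f g N : f O = RtoC 0 -> g O = RtoC 0 ->
  eval_word q w (fun n => Cplus (f n) (g n)) N = Cplus (eval_word q w f N) (eval_word q w g N).
Proof.
  intros Hf Hg. revert N. induction w as [|[|] w IH]; intros N; simpl; auto.
  - rewrite !Rop_coef, IH by (apply eval_word_at_0; rewrite ?Hf, ?Hg; ring). ring.
  - rewrite (functional_extensionality _ _ IH). apply ymul_plus.
Qed.

Lemma eval_word_scal w c f N : f O = RtoC 0 ->
  eval_word q w (fun n => Cmult c (f n)) N = Cmult c (eval_word q w f N).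
Proof.
  intros Hf. revert N. induction w as [|[|] w IH]; intros N; simpl; auto.
  - rewrite !Rop_coef, IH by (apply eval_word_at_0; rewrite ?Hf; ring). ring.
  - rewrite (functional_extensionality _ _ IH). apply ymul_scal.
Qed.

Lemma vanishes_below_monomial M : vanishes_below M (monomial M).
Proof. intros N HN. unfold monomial. destruct (Nat.eqb_spec N M); [lia|reflexivity]. Qed.

Lemma rho_bounded_monomial M : rho_bounded q 1 (monomial M).
Proof.
  intros N. pose proof (pow_R1_Rle _ N (Rlt_le _ _ rho_gt_1)). unfold monomial.
  destruct (Nat.eqb N M); [rewrite Cmod_1|rewrite Cmod_0]; lra.
Qed.

Lemma vanishes_below_ps_tail M : vanishes_below (S M) (ps_tail M).
Proof. intros N HN. unfold ps_tail. destruct (Nat.ltb_spec M N); [lia|reflexivity]. Qed.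

Lemma rho_bounded_ps_tail M : rho_bounded q 1 (ps_tail M).
Proof.
  intros N. pose proof (pow_R1_Rle _ N (Rlt_le _ _ rho_gt_1)). unfold ps_tail.
  destruct (Nat.ltb M N); [rewrite Cmod_1|rewrite Cmod_0]; lra.
Qed.
Lemma Rop_monomial M : (1 <= M)%nat ->
  Rop q (monomial M) = fun N => Cmult (yq q M) (monomial M N).
Proof.
  intros HM. apply functional_extensionality. intros N.
  rewrite Rop_coef by (apply vanishes_below_monomial; lia). unfold monomial.
  destruct (Nat.eqb_spec N M); [subst|]; ring.
Qed.

Lemma ex_series_value K c f : (1 <= K)%nat -> rho_bounded q c f ->
  ex_series (fun N => Cmult (f N) (cpow q (K * N))).
Proof.
  intros HK Hf. pose proof (Cmod_ge_0 q). pose proof (rho_bounded_nonneg _ _ Hf).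
  pose proof rho_Cmod_lt_1.
  apply (ex_series_Cmod_le _ (fun N => c * (rho q * Cmod q) ^ N)).
  - intros N. rewrite Cmod_mult, Rpow_mult_distr, <- Rmult_assoc.
    apply Rmult_le_compat; try apply Cmod_ge_0; [apply Hf|].
    rewrite <- (Rmult_1_r (Cmod q ^ N)), <- (pow_O (Cmod q)).
    apply Cmod_cpow_le_mul. nia.
  - apply ex_series_geom_scal. exact rho_Cmod_lt_1.
Qed.

Lemma Cmod_value_le K m c f : (1 <= K)%nat -> (1 <= m)%nat -> vanishes_below m f ->
  rho_bounded q c f ->
  Cmod (value_at_qpow q K f)
    <= c * Cmod q ^ (K - 1) * (rho q * Cmod q) ^ m / (1 - rho q * Cmod q).
Proof.
  intros HK Hm Hf0 Hf. pose proof (Cmod_ge_0 q). pose proof (rho_bounded_nonneg _ _ Hf).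
  pose proof rho_Cmod_lt_1.
  destruct (Series_geom_from (c * Cmod q ^ (K - 1)) (rho q * Cmod q) m rho_Cmod_lt_1)
    as [Hex <-].
  apply CSeries_Cmod_le; auto. intros N. destruct (Nat.leb_spec m N).
  - rewrite Cmod_mult, Rpow_mult_distr.
    replace (c * Cmod q ^ (K - 1) * (rho q ^ N * Cmod q ^ N))
      with ((c * rho q ^ N) * (Cmod q ^ N * Cmod q ^ (K - 1))) by ring.
    apply Rmult_le_compat; try apply Cmod_ge_0; [apply Hf|].
    apply Cmod_cpow_le_mul. nia.
  - rewrite Hf0 by lia. rewrite Cmult_0_l, Cmod_0. lra.
Qed.

Lemma value_plus K c1 c2 f g : (1 <= K)%nat -> rho_bounded q c1 f -> rho_bounded q c2 g ->
  value_at_qpow q K (fun n => Cplus (f n) (g n))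
  = Cplus (value_at_qpow q K f) (value_at_qpow q K g).
Proof.
  intros HK Hf Hg. unfold value_at_qpow. rewrite <- CSeries_plus by eauto using ex_series_value.
  apply CSeries_ext. intros N. ring.
Qed.

Lemma value_scal K c a f : (1 <= K)%nat -> rho_bounded q c f ->
  value_at_qpow q K (fun n => Cmult a (f n)) = Cmult a (value_at_qpow q K f).
Proof.
  intros HK Hf. unfold value_at_qpow. rewrite <- CSeries_scal by eauto using ex_series_value.
  apply CSeries_ext. intros N. ring.
Qed.

Lemma value_monomial K M : value_at_qpow q K (monomial M) = cpow q (K * M).
Proof.
  unfold value_at_qpow. rewrite <- (CSeries_unique _ _ (is_series_single (cpow q (K * M)) M)).
  apply CSeries_ext. intros N. unfold monomial.
  destruct (Nat.eqb_spec N M); [subst|]; ring.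
Qed.

Lemma value_Rop K c f : f O = RtoC 0 -> rho_bounded q c f ->
  value_at_qpow q K (Rop q f) = CSeries (fun k => value_at_qpow q (K + S k) f).
Proof.
  intros Hf0 Hf. pose proof (Cmod_ge_0 q). pose proof (rho_bounded_nonneg _ _ Hf).
  pose proof rho_Cmod_lt_1. set (x := rho q * Cmod q) in *.
  unfold value_at_qpow.
  rewrite (CSeries_ext _ (fun N => CSeries (fun k => Cmult (f N) (cpow q ((K + S k) * N))))).
  2: { intros [|N].
       - rewrite Rop_coef, Hf0 by exact Hf0.
         rewrite (CSeries_ext _ (fun _ => RtoC 0)) by (intros; ring).
         rewrite CSeries_zero. ring.
       - rewrite Rop_coef, <- Cmult_assoc, (Cmult_comm (yq q _)), Cmult_assoc by exact Hf0.
         unfold yq. rewrite <- CSeries_scal by (apply ex_series_yq; lia).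
         apply CSeries_ext. intros k. rewrite Nat.mul_add_distr_r, cpow_add. ring. }
  apply (CSeries_swap _ (fun N k => (c * x ^ N) * Cmod q ^ k)).
  - intros [|N] k.
    + rewrite Hf0, Cmult_0_l, Cmod_0. apply Rmult_le_pos; apply Rmult_le_pos || apply pow_le;
        auto; apply pow_le; lra.
    + rewrite Cmod_mult. unfold x. rewrite Rpow_mult_distr.
      replace (c * (rho q ^ S N * Cmod q ^ S N) * Cmod q ^ k)
        with ((c * rho q ^ S N) * (Cmod q ^ S N * Cmod q ^ k)) by ring.
      apply Rmult_le_compat; try apply Cmod_ge_0; [apply Hf|].
      apply Cmod_cpow_le_mul. nia.
  - intros N. apply ex_series_geom_scal. lra.
  - apply (ex_series_ext (fun N => (c / (1 - Cmod q)) * x ^ N)).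
    + intros N. simpl. rewrite Series_geom_scal by lra. field. lra.
    + apply ex_series_geom_scal. exact rho_Cmod_lt_1.
Qed.

Lemma yq_unfold K : (1 <= K)%nat -> yq q K = Cplus (cpow q K) (Cmult (cpow q K) (yq q K)).
Proof.
  intros HK. unfold yq at 1. rewrite (CSeries_shift _ (ex_series_yq K HK)).
  rewrite (CSeries_ext _ (fun k => Cmult (cpow q K) (cpow q (S k * K)))).
  - rewrite CSeries_scal by (apply ex_series_yq, HK). simpl. rewrite Nat.add_0_r. reflexivity.
  - intros k. change (S (S k) * K)%nat with (K + S k * K)%nat. apply cpow_add.
Qed.

(* The difference [d] of the two sides satisfies [d = q^K d], hence vanishes. *)
Lemma value_ymul K c f : (1 <= K)%nat -> rho_bounded q c f ->
  value_at_qpow q K (ymul f) = Cmult (yq q K) (value_at_qpow q K f).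
Proof.
  intros HK Hf. pose proof (Cmod_ge_0 q).
  pose proof (ex_series_value K c f HK Hf) as Hexf.
  pose proof (ex_series_value K _ _ HK (rho_bounded_ymul c f Hf)) as Hexy.
  set (z := cpow q K).
  assert (Hz : Cmod z < 1).
  { unfold z. rewrite Cmod_cpow.
    eapply Rle_lt_trans; [apply (pow_le_pow_contract _ 1 K); lra || lia|]. simpl. lra. }
  assert (Hy : value_at_qpow q K (ymul f)
               = Cmult z (Cplus (value_at_qpow q K (ymul f)) (value_at_qpow q K f))).
  { unfold value_at_qpow at 1. rewrite (CSeries_shift _ Hexy), ymul_0, Cmult_0_l, Cplus_0_l.
    rewrite (CSeries_ext _ (fun N => Cmult z (Cplus (Cmult (ymul f N) (cpow q (K * N)))
                                                    (Cmult (f N) (cpow q (K * N)))))).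
    - rewrite CSeries_scal, CSeries_plus; auto.
      apply (@ex_series_plus C_AbsRing C_NormedModule); auto.
    - intros N. rewrite ymul_S. replace (K * S N)%nat with (K + K * N)%nat by lia.
      rewrite cpow_add. unfold z. ring. }
  assert (Hd : Cminus (value_at_qpow q K (ymul f)) (Cmult (yq q K) (value_at_qpow q K f)) = RtoC 0).
  { apply (Cmult_fixpoint_eq_0 _ z Hz). rewrite Hy at 1. rewrite (yq_unfold K HK) at 1.
    fold z. ring. }
  apply (f_equal (fun d => Cplus d (Cmult (yq q K) (value_at_qpow q K f)))) in Hd.
  rewrite Cplus_0_l in Hd. rewrite <- Hd. ring.
Qed.
End Estimates.

(** * Duality *)

Definition word_value (q : C) (w : list letter) (M K : nat) : C :=
  value_at_qpow q K (eval_word q w (monomial M)).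

Definition word_double_sum (q : C) (w : list letter) : C :=
  CSeries (fun k => CSeries (fun i => word_value q w (S i) (S k))).

Section WordValues.

Variable q : C.
Hypothesis hq : Cmod q < 1.

Lemma rho_bounded_eval_word_monomial w M : (1 <= M)%nat ->
  rho_bounded q (lam q ^ length w) (eval_word q w (monomial M)).
Proof.
  intros HM. rewrite <- (Rmult_1_l (lam q ^ length w)).
  apply rho_bounded_eval_word, rho_bounded_monomial; auto.
  apply vanishes_below_monomial. lia.
Qed.

Lemma Cmod_word_value_le w M K : (1 <= M)%nat -> (1 <= K)%nat ->
  Cmod (word_value q w M K)
    <= lam q ^ length w * Cmod q ^ (K - 1) * (rho q * Cmod q) ^ M / (1 - rho q * Cmod q).
Proof.
  intros HM HK. apply Cmod_value_le; auto.
  - apply vanishes_below_eval_word, vanishes_below_monomial; auto.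
  - apply rho_bounded_eval_word_monomial; auto.
Qed.

Lemma word_value_nil M K : word_value q nil M K = cpow q (K * M).
Proof. apply value_monomial. Qed.

Lemma word_value_cons_LR w M K : (1 <= M)%nat ->
  word_value q (LR :: w) M K = CSeries (fun k => word_value q w M (K + S k)).
Proof.
  intros HM. apply (value_Rop q hq K (lam q ^ length w)).
  - apply eval_word_at_0; auto. apply vanishes_below_monomial. lia.
  - apply rho_bounded_eval_word_monomial; auto.
Qed.

Lemma word_value_cons_LY w M K : (1 <= M)%nat -> (1 <= K)%nat ->
  word_value q (LY :: w) M K = Cmult (yq q K) (word_value q w M K).
Proof.
  intros HM HK. apply (value_ymul q hq K (lam q ^ length w)); auto.
  apply rho_bounded_eval_word_monomial; auto.
Qed.

Lemma word_value_snoc_LR w M K : (1 <= M)%nat -> (1 <= K)%nat ->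
  word_value q (w ++ LR :: nil) M K = Cmult (yq q M) (word_value q w M K).
Proof.
  intros HM HK. unfold word_value. rewrite <- (value_scal q hq K (lam q ^ length w)); auto.
  2: apply rho_bounded_eval_word_monomial; auto.
  f_equal. apply functional_extensionality. intros N.
  rewrite eval_word_app. simpl. rewrite Rop_monomial by auto.
  apply eval_word_scal; auto. apply vanishes_below_monomial; lia.
Qed.

Lemma rho_bounded_eval_word_ps_tail w M :
  rho_bounded q (lam q ^ length w) (eval_word q w (ps_tail M)).
Proof.
  rewrite <- (Rmult_1_l (lam q ^ length w)).
  apply rho_bounded_eval_word, rho_bounded_ps_tail; auto.
Qed.

(* The remainder after [n] terms is the value of [eval_word q w (ps_tail (M + S n))],
   which decays geometrically in [n]. *)
Lemma value_eval_word_ps_tail w M K : (1 <= K)%nat ->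
  value_at_qpow q K (eval_word q w (ps_tail M)) = CSeries (fun i => word_value q w (M + S i) K).
Proof.
  intros HK. pose proof (Cmod_ge_0 q). pose proof (rho_Cmod_lt_1 q hq).
  pose proof (lam_pos q hq).
  set (V := fun M' => value_at_qpow q K (eval_word q w (ps_tail M'))).
  set (t := fun i => word_value q w (M + S i) K).
  assert (Hsplit : forall M', V M' = Cplus (word_value q w (S M') K) (V (S M'))).
  { intros M'. unfold V, word_value. rewrite (ps_tail_S M').
    erewrite (functional_extensionality (eval_word q w _)).
    2: { intros N. apply (eval_word_plus q hq); [|reflexivity].
         apply vanishes_below_monomial. lia. }
    apply (value_plus q hq K (lam q ^ length w) (lam q ^ length w)); auto.
    - apply rho_bounded_eval_word_monomial. lia.
    - apply rho_bounded_eval_word_ps_tail. }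
  assert (Hpartial : forall n, V M = Cplus (sum_n t n) (V (M + S n)%nat)).
  { induction n as [|n IH].
    - unfold t. rewrite sum_O, Hsplit, Nat.add_1_r. reflexivity.
    - rewrite sum_Sn, IH, (Hsplit (M + S n)%nat). change plus with Cplus.
      replace (S (M + S n)) with (M + S (S n))%nat by lia. unfold t. ring. }
  set (x := rho q * Cmod q) in *.
  change (V M = CSeries t). symmetry.
  apply CSeries_unique, (is_series_C_of_remainder _ (fun n => V (M + S n)%nat) _
    (lam q ^ length w * Cmod q ^ (K - 1) * x ^ S (S M) / (1 - x)) x); auto.
  intros n. eapply Rle_trans.
  - apply (Cmod_value_le q hq K (S (M + S n))); auto; [lia| |].
    + apply vanishes_below_eval_word, vanishes_below_ps_tail; auto; lia.
    + apply rho_bounded_eval_word_ps_tail.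
  - replace (S (M + S n)) with (S (S M) + n)%nat by lia. rewrite pow_add.
    fold x. apply Req_le. field. lra.
Qed.

Lemma word_value_snoc_LY w M K : (1 <= K)%nat ->
  word_value q (w ++ LY :: nil) M K = CSeries (fun i => word_value q w (M + S i) K).
Proof.
  intros HK. unfold word_value at 1. rewrite eval_word_app. simpl.
  rewrite ymul_monomial. apply value_eval_word_ps_tail, HK.
Qed.

Lemma word_value_dual w M K : (1 <= M)%nat -> (1 <= K)%nat ->
  word_value q w M K = word_value q (dual_word w) K M.
Proof.
  revert M K. induction w as [|[|] w IH]; intros M K HM HK.
  - rewrite !word_value_nil, Nat.mul_comm. reflexivity.
  - change (dual_word (LR :: w)) with (dual_word w ++ LY :: nil).
    rewrite word_value_cons_LR, word_value_snoc_LY by auto.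
    apply CSeries_ext. intros k. apply IH; lia.
  - change (dual_word (LY :: w)) with (dual_word w ++ LR :: nil).
    rewrite word_value_cons_LY, word_value_snoc_LR, IH by auto. reflexivity.
Qed.

Lemma is_series_frame_word w :
  is_series (eval_word q (LR :: w ++ LY :: nil) (monomial O)) (word_double_sum q w).
Proof.
  pose proof (Cmod_ge_0 q). pose proof (rho_Cmod_lt_1 q hq).
  set (g := eval_word q w (ps_tail O)).
  assert (Hg0 : g O = RtoC 0) by (apply eval_word_at_0; auto).
  assert (Hg : rho_bounded q (lam q ^ length w) g) by apply rho_bounded_eval_word_ps_tail.
  assert (EF : eval_word q (LR :: w ++ LY :: nil) (monomial O) = Rop q g).
  { simpl. rewrite eval_word_app. simpl. rewrite ymul_monomial. reflexivity. }
  rewrite EF. replace (word_double_sum q w) with (CSeries (Rop q g)).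
  - apply CSeries_correct.
    apply (ex_series_Cmod_le _ (fun N => lam q ^ length w / (1 - Cmod q) * (rho q * Cmod q) ^ N)).
    + intros N. apply Rop_decay; auto.
    + apply ex_series_geom_scal; auto.
  - transitivity (value_at_qpow q O (Rop q g)).
    { apply CSeries_ext. intros N. simpl. ring. }
    rewrite (value_Rop q hq O _ g Hg0 Hg). apply CSeries_ext. intros k.
    apply value_eval_word_ps_tail; auto. lia.
Qed.

Lemma word_double_sum_dual w : word_double_sum q (dual_word w) = word_double_sum q w.
Proof.
  unfold word_double_sum. pose proof (Cmod_ge_0 q). pose proof (rho_Cmod_lt_1 q hq).
  pose proof (lam_pos q hq).
  set (x := rho q * Cmod q) in *.
  rewrite (CSeries_ext _ (fun k => CSeries (fun i => word_value q w (S k) (S i)))).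
  2: { intros k. apply CSeries_ext. intros i. symmetry. apply word_value_dual; auto; lia. }
  apply (CSeries_swap _ (fun k i => (lam q ^ length w * x ^ S k / (1 - x)) * Cmod q ^ i)).
  - intros k i. eapply Rle_trans; [apply Cmod_word_value_le; auto; lia|].
    replace (S i - 1)%nat with i by lia. fold x. apply Req_le. field. lra.
  - intros k. apply ex_series_geom_scal. lra.
  - apply (ex_series_ext (fun k => (lam q ^ length w * x / (1 - x) / (1 - Cmod q)) * x ^ k)).
    + intros k. simpl. rewrite Series_geom_scal by lra. field. lra.
    + apply ex_series_geom_scal. lra.
Qed.

End WordValues.

Theorem corollary3p4 (l : nat) (alpha beta : nat -> nat) (q : C)
  (hl : (1 <= l)%nat) (ha1 : (0 < alpha 1%nat)%nat) (hbl : (0 < beta l)%nat)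
  (hq : (Cmod q < 1)%R) :
  exists v : C,
    has_value_at_1 (nest q (map (fun j => (alpha j, beta j)) (seq 1 l))) v /\
    has_value_at_1 (nest q (map (fun j => (beta j, alpha j)) (rev (seq 1 l)))) v.
Proof.
  destruct (word_of_blocks_frame l alpha beta hl ha1 hbl) as [w Hw].
  exists (word_double_sum q w).
  unfold has_value_at_1. rewrite !nest_eval_word. split.
  - rewrite Hw. apply is_series_frame_word, hq.
  - replace (map (fun j => (beta j, alpha j)) (rev (seq 1 l)))
      with (rev (map (fun p => (snd p, fst p)) (map (fun j => (alpha j, beta j)) (seq 1 l))))
      by (rewrite map_map, map_rev; reflexivity).
    rewrite word_of_blocks_rev_swap, Hw, dual_word_frame, <- word_double_sum_dual by exact hq.
    apply is_series_frame_word, hq.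
Qed.
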